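(* Let $K\subset\mathbb{R}$ be a real biquadratic bicyclic number field with quadratic subfields $k_1,k_2,k_3$, whose fundamental units $\varepsilon_i>1$ all satisfy $N_{k_i/\mathbb{Q}}(\varepsilon_i)=-1$. Let $\eta=\varepsilon_1\varepsilon_2\varepsilon_3$. Then $\mathbb{Q}(\eta)=K$, the extension $\mathbb{Q}(\sqrt{\eta})/\mathbb{Q}$ is Galois and its Galois group has exponent $2$. Moreover, there exists $r\in\mathbb{Q}\setminus\{0\}$ such that $K(\sqrt{\eta})=K(\sqrt r)$, and, setting $\rho=\sqrt{r\eta}$, one has $\rho\in K$ and $\eta=\rho^2/r$. *)

(* all numbers live in algC (algebraic closure of Q, with its
   real ordering); subfields of algC are predicates algC -> Prop. *)
From HB Require Import structures.
From mathcomp Require Import all_boot all_order all_algebra.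
From mathcomp Require Import algC algnum.
Set Implicit Arguments. Unset Strict Implicit. Unset Printing Implicit Defensive.
Import Order.TTheory GRing.Theory Num.Theory.
Local Open Scope ring_scope.

Definition rat_square (q : rat) : Prop := exists t : rat, t ^+ 2 = q.

Definition quad_field (d : rat) (x : algC) : Prop :=
  exists p q : rat, x = ratr p + ratr q * sqrtC (ratr d).

Definition biquad_field (a b : rat) (x : algC) : Prop :=
  exists p0 p1 p2 p3 : rat,
    x = ratr p0 + ratr p1 * sqrtC (ratr a) + ratr p2 * sqrtC (ratr b)
        + ratr p3 * (sqrtC (ratr a) * sqrtC (ratr b)).

Definition quad_unit (d : rat) (u : algC) : Prop :=
  quad_field d u /\ u != 0 /\ u \in Aint /\ u^-1 \in Aint.

Definition fundamental_unit (d : rat) (eps : algC) : Prop :=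
  quad_unit d eps /\ 1 < eps /\
  forall u, quad_unit d u -> exists z : int, u = eps ^ z \/ u = - eps ^ z.

Definition quad_norm_is (d : rat) (x : algC) (n : rat) : Prop :=
  exists p q : rat, x = ratr p + ratr q * sqrtC (ratr d) /\
                    p ^+ 2 - d * q ^+ 2 = n.

Definition is_subfield (F : algC -> Prop) : Prop :=
  F 1 /\ (forall x y, F x -> F y -> F (x - y)) /\
  (forall x y, F x -> F y -> F (x * y)) /\
  (forall x, F x -> x != 0 -> F x^-1).

Definition gen_field (S : algC -> Prop) (x : algC) : Prop :=
  forall F, is_subfield F -> (forall y, S y -> F y) -> F x.

Definition Qadj (a : algC) : algC -> Prop := gen_field (fun y => y = a).
Definition adjoin (F : algC -> Prop) (a : algC) : algC -> Prop :=
  gen_field (fun y => F y \/ y = a).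

Definition same_set (F G : algC -> Prop) : Prop := forall x, F x <-> G x.

Definition field_embedding (F : algC -> Prop) (s : algC -> algC) : Prop :=
  s 1 = 1 /\ forall x y, F x -> F y -> s (x + y) = s x + s y /\ s (x * y) = s x * s y.

Definition field_aut (F : algC -> Prop) (s : algC -> algC) : Prop :=
  field_embedding F s /\ (forall x, F x -> F (s x)) /\
  (forall y, F y -> exists x, F x /\ s x = y).

(* F/Q is Galois: (char 0, so separable) F is normal: every embedding of F
   into the algebraic closure algC maps F into F *)
Definition galois_over_Q (F : algC -> Prop) : Prop :=
  forall s, field_embedding F s -> forall x, F x -> F (s x).

Definition gal_exponent2 (F : algC -> Prop) : Prop :=
  (exists s, field_aut F s /\ exists x, F x /\ s x <> x) /\
  (forall s, field_aut F s -> forall x, F x -> s (s x) = x).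

From HB Require Import structures.
From mathcomp Require Import all_boot all_order all_algebra.
From mathcomp Require Import algC algnum.
From mathcomp Require Import ring.
From Stdlib Require Import Classical ClassicalEpsilon.
From Stdlib Require Import FunctionalExtensionality PropExtensionality.
Import Order.TTheory GRing.Theory Num.Theory.
Local Open Scope ring_scope.

(* Write eps_i = x_i + y_i sqrt d_i.  Norm -1 means that the conjugate of eps_i is -1/eps_i,
   so 2 x_i = eps_i - 1/eps_i and 2 y_i sqrt d_i = eps_i + 1/eps_i; this turns every identity
   below into an identity of rational functions in eps_1, eps_2, eps_3.
   First, (eta + 1/eta)/2 - ab y_1 y_2 y_3 = x_2 x_3 y_1 sqrt a + x_1 x_3 y_2 sqrt b
   + x_1 x_2 y_3 sqrt(ab) lies in Q(eta), and an element of K whose three irrational coordinates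
   are all nonzero generates K.  Second, rho_0 = 1 - eps_1 eps_2 - eps_1 eps_3 - eps_2 eps_3
   satisfies rho_0^2 = r eta with r = 4 (x_1 + x_2 + x_3 - x_1 x_2 x_3 + ab y_1 y_2 y_3) rational,
   and rho_0 <> 0 because every eps_i > 1.  So sqrt eta * sqrt r lies in K, and Q(sqrt eta) is
   K or K(sqrt r): a tower of quadratic extensions by square roots of rationals.  An embedding
   of such a tower sends each generator to plus or minus itself, so the tower is normal and all
   its automorphisms are involutions, while conjugating the top generator is a nontrivial one. *)

Local Notation rational := (fun x : algC => x \in Crat).

Lemma same_set_eq (F G : algC -> Prop) : same_set F G -> F = G.
Proof.
move=> FG; apply: functional_extensionality => x.
exact: propositional_extensionality.
Qed.

Lemma sqr_eq_sqr (x y : algC) : x ^+ 2 = y ^+ 2 -> x = y \/ x = - y.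
Proof. by move/eqP; rewrite eqf_sqr => /orP[] /eqP; [left | right]. Qed.

Section Subfield.
Context {F : algC -> Prop} (sF : is_subfield F).

Lemma subf1 : F 1. Proof. by case: sF. Qed.
Lemma subfB {x y} : F x -> F y -> F (x - y). Proof. by case: sF => _ [+ _]; apply. Qed.
Lemma subfM {x y} : F x -> F y -> F (x * y). Proof. by case: sF => _ [_ [+ _]]; apply. Qed.

Lemma subf0 : F 0. Proof. by rewrite -(subrr 1); apply: subfB subf1 subf1. Qed.
Lemma subfN {x} : F x -> F (- x). Proof. by rewrite -sub0r; apply: subfB subf0. Qed.

Lemma subfD {x y} : F x -> F y -> F (x + y).
Proof. by move=> Fx Fy; rewrite -[y]opprK; apply/subfB/subfN. Qed.

Lemma subfV {x} : F x -> F x^-1.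
Proof.
have [-> _|x0 Fx] := eqVneq x 0; first by rewrite invr0; apply: subf0.
by case: sF => _ [_ [_]]; apply.
Qed.

Lemma subf_div {x y} : F x -> F y -> F (x / y).
Proof. by move=> Fx Fy; apply/subfM/subfV. Qed.

Lemma subfX {x} n : F x -> F (x ^+ n).
Proof.
by move=> Fx; elim: n => [|n IH]; [rewrite expr0; apply: subf1 | rewrite exprS; apply: subfM].
Qed.

Lemma subf_nat n : F n%:R.
Proof. by elim: n => [|n IH]; [apply: subf0 | rewrite mulrS; apply: subfD subf1 IH]. Qed.

Lemma subf_int (z : int) : F z%:~R.
Proof. by case: z => n; rewrite ?NegzE ?mulrNz; [|apply: subfN]; apply: subf_nat. Qed.

Lemma subf_rat q : F (ratr q). Proof. exact/subf_div/subf_int/subf_int. Qed.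

Lemma subf_Crat {x} : x \in Crat -> F x. Proof. by case/CratP=> q ->; apply: subf_rat. Qed.

Lemma subf_sqr {x y} : F y -> x ^+ 2 = y ^+ 2 -> F x.
Proof. by move=> Fy /sqr_eq_sqr[] ->; last apply: subfN. Qed.

End Subfield.

Ltac subfield_closure sF := repeat first
  [ assumption | apply: (subf_rat sF) | apply: (subf_nat sF) | apply: (subf1 sF)
  | apply: (subf_div sF) | apply: (subfV sF) | apply: (subfD sF) | apply: (subfB sF)
  | apply: (subfM sF) | apply: (subfN sF) | apply: (subfX sF) ].

Lemma Crat_subfield : is_subfield rational.
Proof.
split; first exact: rpred1.
split; first exact: rpredB.
split; first exact: rpredM.
by move=> x Qx _ /=; rewrite rpredV.
Qed.

Lemma gen_field_in {S y} : S y -> gen_field S y.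
Proof. by move=> Sy F _; apply. Qed.

Lemma gen_field_min {S G} : is_subfield G -> (forall y, S y -> G y) ->
  forall x, gen_field S x -> G x.
Proof. by move=> sG SG x; apply. Qed.

Lemma gen_field_subfield S : is_subfield (gen_field S).
Proof.
split; first by move=> F sF _; apply: subf1.
split; first by move=> x y Sx Sy F sF SF; apply: subfB (Sx F sF SF) (Sy F sF SF).
split; first by move=> x y Sx Sy F sF SF; apply: subfM (Sx F sF SF) (Sy F sF SF).
by move=> x Sx _ F sF SF; apply: subfV (Sx F sF SF).
Qed.

Lemma gen_field_eq {S G} : is_subfield G -> (forall y, S y -> G y) ->
  (forall x, G x -> gen_field S x) -> gen_field S = G.
Proof.
by move=> sG SG GS; apply: same_set_eq => x; split; [apply: gen_field_min | apply: GS].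
Qed.

Lemma adjoin_sub_of_mul K u v : K (u * v) -> v != 0 ->
  forall x, adjoin K u x -> adjoin K v x.
Proof.
move=> Kuv v0; apply: gen_field_min (gen_field_subfield _) _ => y [Ky | ->].
  by apply: gen_field_in; left.
rewrite -(mulfK v0 u); apply: (subf_div (gen_field_subfield _)).
  by apply: gen_field_in; left.
by apply: gen_field_in; right.
Qed.

Lemma adjoin_same_of_mul K u v : K (u * v) -> u != 0 -> v != 0 ->
  same_set (adjoin K u) (adjoin K v).
Proof.
move=> Kuv u0 v0 x; split; apply: adjoin_sub_of_mul => //.
by rewrite mulrC.
Qed.

Definition quad_ext (F : algC -> Prop) (t x : algC) : Prop :=
  exists p q, F p /\ F q /\ x = p + q * t.

(* Off [quad_ext F t] the value is unspecified. *)
Definition quad_conj (F : algC -> Prop) (t x : algC) : algC :=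
  let pq := epsilon (inhabits (0, 0))
    (fun pq : algC * algC => F pq.1 /\ F pq.2 /\ x = pq.1 + pq.2 * t) in
  pq.1 - pq.2 * t.

Section QuadraticExtension.
Context {F : algC -> Prop} (sF : is_subfield F) (t : algC).

Lemma quad_ext_base x : F x -> quad_ext F t x.
Proof.
move=> Fx; exists x, 0; rewrite mul0r addr0.
by split=> //; split=> //; apply: subf0.
Qed.

Lemma quad_ext_gen : quad_ext F t t.
Proof.
exists 0, 1; rewrite add0r mul1r.
by split; [apply: subf0 | split=> //; apply: subf1].
Qed.

Hypotheses (Ft2 : F (t ^+ 2)) (Ft : ~ F t).

Lemma quad_ext_coord_inj {p q p' q'} : F p -> F q -> F p' -> F q' ->
  p + q * t = p' + q' * t -> p = p' /\ q = q'.
Proof.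
move=> Fp Fq Fp' Fq'; have [<- E|qq' E] := eqVneq q q'.
  by split=> //; apply: (addIr (q * t)).
have Et : (q - q') * t = p' - p.
  by apply: (addrI p); rewrite mulrBl addrA E; ring.
case: Ft; have -> : t = (p' - p) / (q - q') by rewrite -Et mulrAC mulfV ?mul1r ?subr_eq0.
by subfield_closure sF.
Qed.

Lemma quad_ext_subfield : is_subfield (quad_ext F t).
Proof.
split; first exact/quad_ext_base/subf1.
split.
  move=> _ _ [p [q [Fp [Fq ->]]]] [p' [q' [Fp' [Fq' ->]]]].
  exists (p - p'), (q - q'); split; first by subfield_closure sF.
  by split; [subfield_closure sF | ring].
split.
  move=> _ _ [p [q [Fp [Fq ->]]]] [p' [q' [Fp' [Fq' ->]]]].
  exists (p * p' + q * q' * t ^+ 2), (p * q' + q * p').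
  by split; [subfield_closure sF | split; [subfield_closure sF | ring]].
move=> _ [p [q [Fp [Fq ->]]]] x0.
pose n := p ^+ 2 - q ^+ 2 * t ^+ 2.
have n0 : n != 0.
  apply: contra_notN Ft => /eqP n0.
  have E : (p - q * t) * (p + q * t) = 0 by rewrite -[RHS]n0 /n; ring.
  move/eqP: E; rewrite mulf_eq0 (negPf x0) orbF subr_eq0 => /eqP E.
  have q0 : q != 0 by apply: contraNneq x0 => q0; rewrite E q0 !mul0r addr0.
  have -> : t = p / q by rewrite E mulrC mulKf.
  by subfield_closure sF.
exists (p / n), (- q / n).
split; first by subfield_closure sF.
split; first by subfield_closure sF.
by apply: (mulfI x0); rewrite mulfV // /n; field; rewrite exprMn.
Qed.

Lemma quad_conjE {p q} : F p -> F q -> quad_conj F t (p + q * t) = p - q * t.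
Proof.
move=> Fp Fq; rewrite /quad_conj.
set P := (fun pq : algC * algC => _).
have : P (epsilon (inhabits (0, 0)) P) by apply: epsilon_spec; exists (p, q).
case: (epsilon _ P) => p' q' [/= Fp' [Fq' E]].
by have [-> ->] := quad_ext_coord_inj Fp' Fq' Fp Fq (esym E).
Qed.

Lemma quad_conj_gen : quad_conj F t t <> t.
Proof.
have := quad_conjE (subf0 sF) (subf1 sF); rewrite add0r sub0r !mul1r => ->.
by move/eqP; rewrite eqNr => /eqP t0; case: Ft; rewrite t0; apply: subf0.
Qed.

Lemma quad_conj_aut : field_aut (quad_ext F t) (quad_conj F t).
Proof.
have cE := quad_conjE.
split.
  split; first by have := cE _ _ (subf1 sF) (subf0 sF); rewrite mul0r addr0 subr0.
  move=> _ _ [p [q [Fp [Fq ->]]]] [p' [q' [Fp' [Fq' ->]]]]; split.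
    rewrite (_ : _ + _ = (p + p') + (q + q') * t); last ring.
    by rewrite !cE; [ring | subfield_closure sF ..].
  rewrite (_ : _ * _ = (p * p' + q * q' * t ^+ 2) + (p * q' + q * p') * t); last ring.
  by rewrite !cE; [ring | subfield_closure sF ..].
split.
  move=> _ [p [q [Fp [Fq ->]]]]; rewrite cE //.
  by exists p, (- q); split=> //; split; [apply: subfN | ring].
move=> _ [p [q [Fp [Fq ->]]]]; exists (p + (- q) * t); split.
  by exists p, (- q); split=> //; split=> //; apply: subfN.
by rewrite cE ?opprK //; [ring | apply: subfN].
Qed.

End QuadraticExtension.

Section Embedding.
Context {F : algC -> Prop} (sF : is_subfield F) {s : algC -> algC}.
Hypothesis hs : field_embedding F s.

Lemma emb1 : s 1 = 1. Proof. by case: hs. Qed.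

Lemma embD {x y} : F x -> F y -> s (x + y) = s x + s y.
Proof. by case: hs => _ h Fx Fy; case: (h x y Fx Fy). Qed.

Lemma embM {x y} : F x -> F y -> s (x * y) = s x * s y.
Proof. by case: hs => _ h Fx Fy; case: (h x y Fx Fy). Qed.

Lemma emb0 : s 0 = 0.
Proof. by apply: (@addrI _ (s 0)); rewrite -embD ?addr0 //; apply: subf0. Qed.

Lemma embN {x} : F x -> s (- x) = - s x.
Proof.
move=> Fx; apply: (@addrI _ (s x)).
by rewrite -embD ?subrr ?emb0 //; apply: subfN.
Qed.

Lemma embV {x} : F x -> s x^-1 = (s x)^-1.
Proof.
move=> Fx; have [->|x0] := eqVneq x 0; first by rewrite invr0 emb0 invr0.
by apply/esym/mulr1_eq; rewrite -embM ?mulfV ?emb1 //; apply: subfV.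
Qed.

Lemma emb_nat n : s n%:R = n%:R.
Proof.
elim: n => [|n IH]; first exact: emb0.
by rewrite mulrS embD ?IH ?emb1 //; [apply: subf1 | apply: subf_nat].
Qed.

Lemma emb_int (z : int) : s z%:~R = z%:~R.
Proof. by case: z => n; rewrite ?NegzE ?mulrNz ?embN ?emb_nat //; apply: subf_nat. Qed.

Lemma emb_Crat {x} : x \in Crat -> s x = x.
Proof.
case/CratP=> q ->; rewrite /ratr embM ?embV ?emb_int //; try apply: subf_int sF _.
exact/subfV/subf_int.
Qed.

End Embedding.

Lemma field_embedding_sub {F G s} : (forall x, F x -> G x) ->
  field_embedding G s -> field_embedding F s.
Proof. by move=> FG [s1 sDM]; split=> // x y Fx Fy; apply: sDM; apply: FG. Qed.

Inductive sqrt_tower : (algC -> Prop) -> Prop :=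
  | sqrt_tower_Q : sqrt_tower rational
  | sqrt_tower_ext F (t : algC) :
      sqrt_tower F -> t ^+ 2 \in Crat -> ~ F t -> sqrt_tower (quad_ext F t).
Arguments sqrt_tower_ext {F t}.

Lemma sqrt_tower_subfield {F} : sqrt_tower F -> is_subfield F.
Proof.
elim=> [|G t _ sG t2 Gt]; first exact: Crat_subfield.
exact: quad_ext_subfield sG t (subf_Crat sG t2) Gt.
Qed.

Lemma sqrt_tower_emb {F s} : sqrt_tower F -> field_embedding F s ->
  forall x, F x -> F (s x) /\ s (s x) = x.
Proof.
move=> T; elim: T s => {F} [|F t T IH t2 Ft] s hs.
  by move=> x Qx; rewrite !(emb_Crat Crat_subfield hs Qx).
have sF := sqrt_tower_subfield T.
have sG := quad_ext_subfield sF t (subf_Crat sF t2) Ft.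
have FG := quad_ext_base sF t; have Gt := quad_ext_gen sF t.
have /IH sF_stable := field_embedding_sub FG hs.
have st : s t = t \/ s t = - t.
  by apply: sqr_eq_sqr; rewrite -[RHS](emb_Crat sG hs t2) !expr2 (embM hs).
have Gst : quad_ext F t (s t) by case: st => ->; last apply: subfN.
have sst : s (s t) = t.
  by case: st => E; rewrite E ?(embN sG hs Gt) E ?opprK.
move=> _ [p [q [Fp [Fq ->]]]].
have [Fsp ssp] := sF_stable p Fp; have [Fsq ssq] := sF_stable q Fq.
have Gsq := FG _ Fsq; have Gsp := FG _ Fsp.
rewrite (embD hs (FG _ Fp) (subfM sG (FG _ Fq) Gt)) (embM hs (FG _ Fq) Gt).
split; first by apply: (subfD sG) Gsp (subfM sG Gsq Gst).
by rewrite (embD hs Gsp (subfM sG Gsq Gst)) (embM hs Gsq Gst) ssp ssq sst.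
Qed.

Lemma quad_ext_galois {F} {t : algC} : sqrt_tower F -> t ^+ 2 \in Crat -> ~ F t ->
  galois_over_Q (quad_ext F t) /\ gal_exponent2 (quad_ext F t).
Proof.
move=> T t2 Ft; have T' := sqrt_tower_ext T t2 Ft.
have sF := sqrt_tower_subfield T.
split; first by move=> s hs x Gx; have [] := sqrt_tower_emb T' hs x Gx.
split; last by move=> s [hs _] x Gx; have [] := sqrt_tower_emb T' hs x Gx.
exists (quad_conj F t); split; first exact: quad_conj_aut (subf_Crat sF t2) Ft.
by exists t; split; [apply: quad_ext_gen | apply: quad_conj_gen].
Qed.

Lemma biquad_field_eq a b : biquad_field a b =
  quad_ext (quad_ext rational (sqrtC (ratr a))) (sqrtC (ratr b)).
Proof.
apply: same_set_eq => x; split.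
  case=> p0 [p1 [p2 [p3 ->]]].
  exists (ratr p0 + ratr p1 * sqrtC (ratr a)), (ratr p2 + ratr p3 * sqrtC (ratr a)).
  split; first by exists (ratr p0), (ratr p1); rewrite !Crat_rat.
  by split; [exists (ratr p2), (ratr p3); rewrite !Crat_rat | ring].
case=> _ [_ [[_ [_ [/CratP[p0 ->] [/CratP[p1 ->] ->]]]]
  [[_ [_ [/CratP[p2 ->] [/CratP[p3 ->] ->]]]] ->]]].
by exists p0, p1, p2, p3; ring.
Qed.

Lemma rat_square_of_sqr {d u v : rat} : v != 0 -> u ^+ 2 = d * v ^+ 2 -> rat_square d.
Proof. by move=> v0 E; exists (u / v); rewrite expr_div_n E mulfK // expf_neq0. Qed.

Lemma sqrt_nonsquare_notin_Crat {d : rat} {A : algC} :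
  ~ rat_square d -> A ^+ 2 = ratr d -> A \notin Crat.
Proof.
move=> nd hA; apply/negP => /CratP[t Et]; apply: nd; exists t.
by move: hA; rewrite Et -rmorphXn => /fmorph_inj.
Qed.

Lemma subfield_sqrts_of_lincomb F (A B c1 c2 c3 : algC) :
  is_subfield F -> F (A ^+ 2) -> F (B ^+ 2) -> F c1 -> F c2 -> F c3 ->
  (c2 ^+ 2 - A ^+ 2 * c3 ^+ 2) * (c1 ^+ 2 - B ^+ 2 * c3 ^+ 2)
    * (A ^+ 2 * c1 ^+ 2 - B ^+ 2 * c2 ^+ 2) != 0 ->
  F (c1 * A + c2 * B + c3 * (A * B)) -> F A /\ F B.
Proof.
move=> sF FA2 FB2 F1 F2 F3 D0; set al := _ + _ + _ => Fal.
set D := _ * _ * _ in D0.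
pose g := (al ^+ 2 - (c1 ^+ 2 * A ^+ 2 + c2 ^+ 2 * B ^+ 2 + c3 ^+ 2 * A ^+ 2 * B ^+ 2)) / 2.
pose d := al * g - 3%:R * A ^+ 2 * B ^+ 2 * c1 * c2 * c3.
have Fg : F g by rewrite /g; subfield_closure sF.
have Fd : F d by rewrite /d; subfield_closure sF.
have FD : F D by rewrite /D; subfield_closure sF.
(* In the basis [A], [B], [A * B] the coordinates of [al], [g] and [d] form a matrix of
   determinant [- D]; [EA] and [EB] are Cramer's rule. *)
have EA : - D * A = (- A ^+ 2 * c1 ^+ 3 * c2 ^+ 2 + (A ^+ 2) ^+ 2 * c1 ^+ 3 * c3 ^+ 2) * al
   + (- B ^+ 2 * c2 ^+ 3 * c3 + A ^+ 2 * B ^+ 2 * c2 * c3 ^+ 3) * g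
   + (c1 * c2 ^+ 2 - A ^+ 2 * c1 * c3 ^+ 2) * d.
  by rewrite /d /g /al /D; field.
have EB : - D * B = (B ^+ 2 * c1 ^+ 2 * c2 ^+ 3 - (B ^+ 2) ^+ 2 * c2 ^+ 3 * c3 ^+ 2) * al
   + (A ^+ 2 * c1 ^+ 3 * c3 - A ^+ 2 * B ^+ 2 * c1 * c3 ^+ 3) * g
   + (- c1 ^+ 2 * c2 + B ^+ 2 * c2 * c3 ^+ 2) * d.
  by rewrite /d /g /al /D; field.
have DN0 : - D != 0 by rewrite oppr_eq0.
split; [rewrite -(mulKf DN0 A) EA | rewrite -(mulKf DN0 B) EB]; subfield_closure sF.
Qed.

Section Biquadratic.
Context {a b : rat} {A B : algC}.
Hypotheses (hna : ~ rat_square a) (hnb : ~ rat_square b) (hnab : ~ rat_square (a * b)).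
Hypotheses (hA : A ^+ 2 = ratr a) (hB : B ^+ 2 = ratr b).

Lemma sqrt_notin_quad_ext : ~ quad_ext rational A B.
Proof.
case=> _ [_ [/CratP[p ->] [/CratP[q ->] EB]]].
have Eb : ratr (b - p ^+ 2 - q ^+ 2 * a) = ratr (2 * p * q) * A :> algC.
  by rewrite !(rmorphB, rmorphM, rmorphXn, rmorph_nat) /= -hA -hB EB; ring.
have [pq0|pq0] := eqVneq (2 * p * q) 0; last first.
  have EA : A = ratr ((b - p ^+ 2 - q ^+ 2 * a) / (2 * p * q)).
    by rewrite fmorph_div /= Eb mulrC mulKf // fmorph_eq0.
  by have := sqrt_nonsquare_notin_Crat hna hA; rewrite EA Crat_rat.
move: Eb; rewrite pq0 rmorph0 mul0r => /eqP; rewrite fmorph_eq0 subr_eq0 subr_eq.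
move=> /eqP Eb; move: pq0 => /eqP; rewrite !mulf_eq0 /= => /orP[] /eqP pq0.
  by apply: hnab; exists (a * q); rewrite Eb pq0; ring.
by apply: hnb; exists p; rewrite Eb pq0; ring.
Qed.

Lemma sqrt_tower_quad : sqrt_tower (quad_ext rational A).
Proof.
apply: sqrt_tower_ext sqrt_tower_Q _ _; first by rewrite hA Crat_rat.
exact/negP/(sqrt_nonsquare_notin_Crat hna hA).
Qed.

Lemma sqrt_tower_biquad : sqrt_tower (quad_ext (quad_ext rational A) B).
Proof.
apply: sqrt_tower_ext sqrt_tower_quad _ sqrt_notin_quad_ext.
by rewrite hB Crat_rat.
Qed.

Lemma biquad_primitive F (c1 c2 c3 : rat) : is_subfield F ->
  c1 != 0 -> c2 != 0 -> c3 != 0 ->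
  F (ratr c1 * A + ratr c2 * B + ratr c3 * (A * B)) -> F A /\ F B.
Proof.
move=> sF c1n c2n c3n; apply: subfield_sqrts_of_lincomb => //;
  rewrite ?hA ?hB; try exact: subf_rat sF _.
have f1 : c2 ^+ 2 - a * c3 ^+ 2 != 0.
  by rewrite subr_eq0; apply/eqP => /(rat_square_of_sqr c3n).
have f2 : c1 ^+ 2 - b * c3 ^+ 2 != 0.
  by rewrite subr_eq0; apply/eqP => /(rat_square_of_sqr c3n).
have f3 : a * c1 ^+ 2 - b * c2 ^+ 2 != 0.
  rewrite subr_eq0; apply/eqP => E; apply: hnab.
  apply: (rat_square_of_sqr (u := a * c1) c2n).
  by transitivity (a * (a * c1 ^+ 2)); [ring | rewrite E; ring].
have := mulf_neq0 (mulf_neq0 f1 f2) f3; rewrite -(fmorph_eq0 (@ratr algC)).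
by rewrite !(rmorphB, rmorphM, rmorphXn) /=.
Qed.

End Biquadratic.

Section NormMinusOneUnit.
Context {d x y : rat} {s e : algC}.
Hypotheses (hs : s ^+ 2 = ratr d) (hN : x ^+ 2 - d * y ^+ 2 = -1).
Hypothesis he : e = ratr x + ratr y * s.

Lemma normN1_inv : e^-1 = ratr y * s - ratr x.
Proof.
apply: mulr1_eq; rewrite he.
transitivity (- ratr (x ^+ 2 - d * y ^+ 2) : algC); last by rewrite hN rmorphN rmorph1 opprK.
by rewrite !(rmorphB, rmorphM, rmorphXn) /= -hs; ring.
Qed.

Lemma normN1_coords : ratr x = (e - e^-1) / 2 /\ ratr y * s = (e + e^-1) / 2.
Proof. by rewrite normN1_inv he; split; field. Qed.

End NormMinusOneUnit.

Lemma normN1_neq0 {d x y : rat} : ~ rat_square d ->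
  x ^+ 2 - d * y ^+ 2 = -1 -> x != 0 /\ y != 0.
Proof.
move=> nd N; have y0 : y != 0.
  apply: contraTneq (sqr_ge0 x) => y0.
  by rewrite -[x ^+ 2](subrK (d * y ^+ 2)) N y0 expr0n mulr0 addr0 ler0N1.
split=> //; apply/eqP => x0; apply: nd; apply: (rat_square_of_sqr (u := 1) y0).
by move: N; rewrite x0 expr0n /= sub0r expr1n => /oppr_inj ->.
Qed.

Section BicyclicUnits.
Context {a b x1 y1 x2 y2 x3 y3 : rat} {A B eps1 eps2 eps3 : algC}.
Hypotheses (hna : ~ rat_square a) (hnb : ~ rat_square b) (hnab : ~ rat_square (a * b)).
Hypotheses (hA : A ^+ 2 = ratr a) (hB : B ^+ 2 = ratr b).
Hypotheses (E1 : eps1 = ratr x1 + ratr y1 * A) (E2 : eps2 = ratr x2 + ratr y2 * B)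
  (E3 : eps3 = ratr x3 + ratr y3 * (A * B)).
Hypotheses (N1 : x1 ^+ 2 - a * y1 ^+ 2 = -1) (N2 : x2 ^+ 2 - b * y2 ^+ 2 = -1)
  (N3 : x3 ^+ 2 - a * b * y3 ^+ 2 = -1).
Hypotheses (gt1_eps1 : 1 < eps1) (gt1_eps2 : 1 < eps2) (gt1_eps3 : 1 < eps3).

Local Notation K := (quad_ext (quad_ext rational A) B).
Let eta := eps1 * eps2 * eps3.
Let rho0 := 1 - eps1 * eps2 - eps1 * eps3 - eps2 * eps3.
Let r : rat := 4 * (x1 + x2 + x3 - x1 * x2 * x3 + a * b * (y1 * y2 * y3)).

Let hAB : (A * B) ^+ 2 = ratr (a * b).
Proof. by rewrite exprMn hA hB rmorphM. Qed.

Let coords1 := normN1_coords hA N1 E1.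
Let coords2 := normN1_coords hB N2 E2.
Let coords3 := normN1_coords hAB N3 E3.

Let eps_neq0 : [/\ eps1 != 0, eps2 != 0 & eps3 != 0].
Proof. by split; rewrite gt_eqF // (lt_trans ltr01). Qed.

Let eta_neq0 : eta != 0.
Proof. by case: eps_neq0 => *; rewrite !mulf_neq0. Qed.

Let sKA : is_subfield (quad_ext rational A) := sqrt_tower_subfield (sqrt_tower_quad hna hA).
Let sK : is_subfield K := sqrt_tower_subfield (sqrt_tower_biquad hna hnb hnab hA hB).
Let KA : K A := quad_ext_base sKA B _ (quad_ext_gen Crat_subfield A).
Let KB : K B := quad_ext_gen sKA B.

Lemma eta_addV : (eta + eta^-1) / 2 = ratr (a * b * (y1 * y2 * y3))
  + (ratr (x2 * x3 * y1) * A + ratr (x1 * x3 * y2) * B + ratr (x1 * x2 * y3) * (A * B)).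
Proof.
have [X1 Y1] := coords1; have [X2 Y2] := coords2; have [X3 Y3] := coords3.
have [e1 e2 e3] := eps_neq0.
transitivity ((ratr y1 * A) * (ratr y2 * B) * (ratr y3 * (A * B))
  + (ratr x2 * ratr x3 * (ratr y1 * A) + ratr x1 * ratr x3 * (ratr y2 * B)
     + ratr x1 * ratr x2 * (ratr y3 * (A * B)))); last first.
  by rewrite !rmorphM /= -hA -hB; ring.
by rewrite Y1 Y2 Y3 X1 X2 X3 /eta; field; rewrite e1 e2 e3.
Qed.

Lemma Qadj_eta : Qadj eta = K.
Proof.
apply: gen_field_eq sK _ _ => [_ -> | x Kx].
  by rewrite /eta E1 E2 E3; subfield_closure sK.
have sQ := gen_field_subfield (fun y => y = eta).
have Qeta : Qadj eta eta := gen_field_in erefl.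
have [nx1 ny1] := normN1_neq0 hna N1.
have [nx2 ny2] := normN1_neq0 hnb N2.
have [nx3 ny3] := normN1_neq0 hnab N3.
have [QA QB] : Qadj eta A /\ Qadj eta B.
  apply: (biquad_primitive hna hnb hnab hA hB _
    (x2 * x3 * y1) (x1 * x3 * y2) (x1 * x2 * y3) sQ); rewrite ?mulf_neq0 //.
  rewrite (_ : _ + _ = (eta + eta^-1) / 2 - ratr (a * b * (y1 * y2 * y3))).
    by subfield_closure sQ.
  by rewrite eta_addV [ratr _ + _]addrC addrK.
case: Kx => _ [_ [[_ [_ [/CratP[p0 ->] [/CratP[p1 ->] ->]]]]
  [[_ [_ [/CratP[p2 ->] [/CratP[p3 ->] ->]]]] ->]]].
by subfield_closure sQ.
Qed.

Lemma rho0_sqr : rho0 ^+ 2 = ratr r * eta.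
Proof.
have [X1 Y1] := coords1; have [X2 Y2] := coords2; have [X3 Y3] := coords3.
have [e1 e2 e3] := eps_neq0.
have -> : ratr r = 4 * (ratr x1 + ratr x2 + ratr x3 - ratr x1 * ratr x2 * ratr x3
    + (ratr y1 * A) * (ratr y2 * B) * (ratr y3 * (A * B))) :> algC.
  by rewrite /r !(rmorphM, rmorphD, rmorphB, rmorph_nat) /= -hA -hB; ring.
by rewrite Y1 Y2 Y3 X1 X2 X3 /rho0 /eta; field; rewrite e1 e2 e3.
Qed.

Lemma rho0_neq0 : rho0 != 0.
Proof.
have gt1 : 1 < eps1 * eps2 + (eps1 * eps3 + eps2 * eps3).
  have eps_gt0 := lt_trans ltr01.
  apply: lt_le_trans (mulr_egt1 gt1_eps1 gt1_eps2) _.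
  by rewrite lerDl addr_ge0 // ltW // mulr_gt0 // eps_gt0.
have -> : rho0 = 1 - (eps1 * eps2 + (eps1 * eps3 + eps2 * eps3)) by rewrite /rho0; ring.
by rewrite subr_eq0 lt_eqF.
Qed.

Lemma r_neq0 : r != 0.
Proof.
apply: contra_neq rho0_neq0 => r0.
by apply/eqP; rewrite -sqrf_eq0 rho0_sqr r0 rmorph0 mul0r.
Qed.

Lemma K_rho0 : K rho0.
Proof. by rewrite /rho0 E1 E2 E3; subfield_closure sK. Qed.

Lemma K_sqrt_eta_mul_sqrt_r : K (sqrtC eta * sqrtC (ratr r)).
Proof. by apply: (subf_sqr sK K_rho0); rewrite exprMn !sqrtCK rho0_sqr mulrC. Qed.

Lemma K_sqrt_r_eta : K (sqrtC (ratr r * eta)).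
Proof. by apply: (subf_sqr sK K_rho0); rewrite sqrtCK rho0_sqr. Qed.

Lemma sqrt_eta_neq0 : sqrtC eta != 0. Proof. by rewrite sqrtC_eq0 eta_neq0. Qed.

Lemma sqrt_r_neq0 : sqrtC (ratr r) != 0 :> algC.
Proof. by rewrite sqrtC_eq0 fmorph_eq0 r_neq0. Qed.

Lemma Qadj_sqrt_eta_galois :
  galois_over_Q (Qadj (sqrtC eta)) /\ gal_exponent2 (Qadj (sqrtC eta)).
Proof.
have KwC := K_sqrt_eta_mul_sqrt_r; have w0 := sqrt_eta_neq0; have C0 := sqrt_r_neq0.
set w := sqrtC eta in KwC w0 *; set C := sqrtC (ratr r) in KwC C0.
have C2 : C ^+ 2 \in Crat by rewrite sqrtCK Crat_rat.
have sW := gen_field_subfield (fun y => y = w).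
have Ww : Qadj w w := gen_field_in erefl.
have KW x : K x -> Qadj w x.
  rewrite -Qadj_eta; apply: (gen_field_min sW _ x) => _ ->.
  by rewrite -(sqrtCK eta); apply: (subfX sW).
case: (classic (K C)) => [KC | nKC].
  have -> : Qadj w = K.
    apply: (gen_field_eq sK _ KW) => _ ->.
    by rewrite -(mulfK C0 w); apply: subf_div.
  apply: quad_ext_galois (sqrt_tower_quad hna hA) _ (sqrt_notin_quad_ext hna hnb hnab hA hB).
  by rewrite hB Crat_rat.
have sKC := quad_ext_subfield sK C (subf_Crat sK C2) nKC.
have -> : Qadj w = quad_ext K C.
  apply: (gen_field_eq sKC) => [_ -> | _ [p [q [Kp [Kq ->]]]]].
    rewrite -(mulfK C0 w); apply: (subf_div sKC); first exact: quad_ext_base.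
    exact: quad_ext_gen.
  apply: (subfD sW (KW _ Kp)); apply: (subfM sW (KW _ Kq)).
  by rewrite -(mulKf w0 C); apply: (subfM sW (subfV sW Ww) (KW _ KwC)).
exact: quad_ext_galois (sqrt_tower_biquad hna hnb hnab hA hB) C2 nKC.
Qed.

Theorem bicyclic_unit_product :
  same_set (Qadj eta) K /\
  galois_over_Q (Qadj (sqrtC eta)) /\ gal_exponent2 (Qadj (sqrtC eta)) /\
  exists r : rat, r != 0 /\
    same_set (adjoin K (sqrtC eta)) (adjoin K (sqrtC (ratr r))) /\
    (let rho := sqrtC (ratr r * eta) in K rho /\ eta = rho ^+ 2 / ratr r).
Proof.
split; first by rewrite Qadj_eta => x; split.
have [gal exp2] := Qadj_sqrt_eta_galois.
do 2 split=> //; exists r; split; first exact: r_neq0.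
split; first exact: adjoin_same_of_mul K_sqrt_eta_mul_sqrt_r sqrt_eta_neq0 sqrt_r_neq0.
split; first exact: K_sqrt_r_eta.
by rewrite sqrtCK mulrC mulKf // fmorph_eq0 r_neq0.
Qed.

End BicyclicUnits.

Theorem mainTheorem4 (a b : rat) (eps1 eps2 eps3 : algC)
  (ha : 0 < a) (hb : 0 < b)
  (hna : ~ rat_square a) (hnb : ~ rat_square b) (hnab : ~ rat_square (a * b))
  (he1 : fundamental_unit a eps1) (he2 : fundamental_unit b eps2)
  (he3 : fundamental_unit (a * b) eps3)
  (hn1 : quad_norm_is a eps1 (-1)) (hn2 : quad_norm_is b eps2 (-1))
  (hn3 : quad_norm_is (a * b) eps3 (-1)) :
  let K := biquad_field a b in
  let eta := eps1 * eps2 * eps3 in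
  same_set (Qadj eta) K /\
  galois_over_Q (Qadj (sqrtC eta)) /\ gal_exponent2 (Qadj (sqrtC eta)) /\
  exists r : rat, r != 0 /\
    same_set (adjoin K (sqrtC eta)) (adjoin K (sqrtC (ratr r))) /\
    (let rho := sqrtC (ratr r * eta) in K rho /\ eta = rho ^+ 2 / ratr r).
Proof.
move=> K eta; rewrite {}/K biquad_field_eq.
have gt1 d e : fundamental_unit d e -> 1 < e by case=> _ [].
case: hn1 => x1 [y1 [E1 N1]]; case: hn2 => x2 [y2 [E2 N2]]; case: hn3 => x3 [y3 [E3 N3]].
rewrite rmorphM /= sqrtCM ?nnegrE ?ler0q ?ltW // in E3.
exact: (bicyclic_unit_product hna hnb hnab (sqrtCK _) (sqrtCK _) E1 E2 E3 N1 N2 N3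
  (gt1 _ _ he1) (gt1 _ _ he2) (gt1 _ _ he3)).
Qed.
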